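(* Let $n\ge4$ be even. Let $G$ have node set $V_1\cup V_2\cup\{v\}$ with $|V_1|=n/2$, $|V_2|=n/2-1$ (disjoint, not containing $v$), and edge set $\{(x,y):x\in V_1,\ y\in V_2\cup\{v\}\}$. Consider the \textsc{Random Pick} process on $G$ from the initial state in which only $v$ is colored. Then with probability $1-o(1)$ as $n\to\infty$, the convergence time exceeds $\frac18 n\log_2 n$. (Here $\Delta_+(G)=n/2$ and $D(G)=1$.)
   Context: A state is a map $V\to\{b,r,u\}$ (blue, red, uncolored); colored means blue or red. \textsc{Random Pick} process: in each round $t$ every node $x$ with at least one out-neighbor picks an out-neighbor $ps_t(x)$ uniformly at random, independently; an uncolored node adopts the color of its pick if the pick is colored, and all other nodes keep their color. A state is stable if no uncolored node has a colored out-neighbor; the convergence time is the first round $t\ge0$ at which the state is stable. *)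

From Stdlib Require Import Reals.
From mathcomp Require Import all_boot.

Set Implicit Arguments.
Unset Strict Implicit.
Unset Printing Implicit Defensive.

Inductive color := Blue | Red | Unc.

Definition colored (c : color) : bool :=
  match c with Unc => false | _ => true end.

Section RandomPick.
Variable V : finType.
Variable e : rel V.  (* e x y : y is an out-neighbor of x *)

Definition has_out (x : V) : bool := [exists y, e x y].

(* A pick assignment for one round: every node with an out-neighbor picks one
   of its out-neighbors; nodes without out-neighbors pick nothing (encoded as
   the dummy value x itself). Uniform counting over valid picks = independent
   uniform choices at every node. *)
Definition valid_pick (p : {ffun V -> V}) : bool :=
  [forall x, if has_out x then e x (p x) else p x == x].

Definition step (s : V -> color) (p : V -> V) : V -> color :=
  fun x => if (~~ colored (s x)) && has_out x && colored (s (p x))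
           then s (p x) else s x.

Fixpoint run (f : nat -> V -> V) (s0 : V -> color) (t : nat) : V -> color :=
  match t with
  | 0 => s0
  | t'.+1 => step (run f s0 t') (f t')
  end.

Definition stable (s : V -> color) : bool :=
  [forall x, [forall y, (~~ colored (s x)) && e x y ==> ~~ colored (s y)]].

Definition picks_of (T : nat) (ps : {ffun 'I_T -> {ffun V -> V}}) : nat -> V -> V :=
  fun k => match insub k with Some i => ps i | None => (fun x => x) end.

Definition valid_run (T : nat) (ps : {ffun 'I_T -> {ffun V -> V}}) : bool :=
  [forall i, valid_pick (ps i)].

(* Convergence time > T (T : nat): the states at rounds 0, ..., T are all unstable.
   This event depends only on the picks of rounds 1..T. *)
Definition exceeds (s0 : V -> color) (T : nat) (ps : {ffun 'I_T -> {ffun V -> V}}) : bool :=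
  [forall t : 'I_T.+1, ~~ stable (run (picks_of ps) s0 t)].

Definition prob_exceeds (s0 : V -> color) (T : nat) : R :=
  Rdiv (INR #|[pred ps : {ffun 'I_T -> {ffun V -> V}} | valid_run ps && exceeds s0 ps]|)
       (INR #|[pred ps : {ffun 'I_T -> {ffun V -> V}} | valid_run ps]|).

End RandomPick.

(* The graph of the theorem on node set 'I_n:
   V1 = {0, ..., n/2 - 1}, V2 = {n/2, ..., n-2}, v = n-1;
   edges (x,y) with x in V1 and y in V2 ∪ {v}. *)
Definition gedge (n : nat) : rel 'I_n :=
  fun x y => (x < n./2) && (n./2 <= y).

Definition init (n : nat) (c : color) : 'I_n -> color :=
  fun x => if val x == n.-1 then c else Unc.

Definition threshold (n : nat) : nat :=
  Z.to_nat (Int_part (Rdiv (Rmult (INR n) (Rdiv (ln (INR n)) (ln (INR 2)))) (INR 8))).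

Arguments gedge n : clear implicits.
Arguments init n c : clear implicits.

From Stdlib Require Import Reals ZArith Lra.
From mathcomp Require Import all_boot zify.

Set Implicit Arguments.
Unset Strict Implicit.
Unset Printing Implicit Defensive.

(* Nodes of V2 have no out-neighbours and stay uncoloured, v keeps its colour,
   and a node of V1 becomes coloured exactly when it picks v.  Every node of V1
   is adjacent to v, so the process can be stable by round T only if each of
   the m = n/2 nodes of V1 has picked v in some round; regrouping the pick
   families node by node, these m events are independent, each of probability
   1 - q with q = (1 - 1/m)^T.  Since (1 - q)^m (1 + m q) <= 1, the probability
   of stabilising within T rounds is at most 1/(m q), and for T <= n log2 n / 8
   one has 1/q <= 2^(T/(m/2) + 1) <= 2 n^(3/4), so it is O(n^(-1/4)). *)

Lemma card_ffun_forall (A B : finType) (P : A -> pred B) :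
  #|[pred f : {ffun A -> B} | [forall x, P x (f x)]]| = \prod_x #|P x|.
Proof.
rewrite -(@eq_card _ (family P)); last first.
  by move=> f; rewrite !inE; apply/familyP/forallP.
by rewrite card_family foldrE big_map big_enum.
Qed.

Lemma card_ffun_columns (I A B : finType) (Q : A -> pred {ffun I -> B}) :
  #|[pred f : {ffun I -> {ffun A -> B}} | [forall x, Q x [ffun i => f i x]]]|
  = \prod_x #|Q x|.
Proof.
pose col (f : {ffun I -> {ffun A -> B}}) := [ffun x => [ffun i => f i x]].
pose row (g : {ffun A -> {ffun I -> B}}) := [ffun i => [ffun x => g x i]].
have colK : cancel col row.
  by move=> f; apply/ffunP=> i; apply/ffunP=> x; rewrite !ffunE.
have rowK : cancel row col.
  by move=> g; apply/ffunP=> x; apply/ffunP=> i; rewrite !ffunE.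
rewrite -card_ffun_forall -(card_image (can_inj colK)).
apply: eq_card => g; rewrite !inE; apply/imageP/forallP => [[f] | Qg].
  by rewrite inE => /forallP Qf -> x; rewrite ffunE.
exists (row g); last by rewrite rowK.
rewrite inE; apply/forallP => x.
by have := Qg x; rewrite -{1}(rowK g) ffunE.
Qed.

Lemma card_ord_ltn n m : m <= n -> #|[pred i : 'I_n | i < m]| = m.
Proof.
move=> le_mn; rewrite -sum1_card (eq_bigl (fun i : 'I_n => i < m)) //.
by rewrite -(big_ord_widen _ (fun _ => 1)) // sum1_card card_ord.
Qed.

Lemma card_ord_geq n m : m <= n -> #|[pred i : 'I_n | m <= i]| = n - m.
Proof.
move=> le_mn; have split_n := cardC [pred i : 'I_n | i < m].
rewrite card_ord card_ord_ltn // in split_n.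
rewrite -(@eq_card _ [predC [pred i : 'I_n | i < m]]) => [|i]; last first.
  by rewrite !inE ltnNge negbK.
by apply/eqP; rewrite -(eqn_add2l m) split_n subnKC.
Qed.

Lemma prod_ord_ltn_const n m k : m <= n ->
  \prod_(i < n) (if i < m then k else 1) = k ^ m.
Proof.
move=> le_mn; rewrite -big_mkcond /= -(big_ord_widen _ (fun _ => k)) //.
by rewrite prod_nat_const card_ord.
Qed.

Lemma bernoulli_subn a b k : b <= a -> (a - b) ^ k * (a + k * b) <= a ^ k.+1.
Proof.
move=> le_ba; elim: k => [|k IH]; first by rewrite mul0n addn0 expn1 mul1n.
have step : (a - b) * (a + k.+1 * b) <= a * (a + k * b) by nia.
rewrite expnS [a ^ k.+2]expnS; move: ((a - b) ^ k) (a ^ k.+1) IH => X Y IH.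
have := leq_mul (leqnn X) step; have := leq_mul (leqnn a) IH; nia.
Qed.

Lemma bernoulli_pred m h : h <= m -> m ^ h * (m - h) <= m * (m - 1) ^ h.
Proof.
elim: h => [|h IH] le_hm; first by rewrite mul1n muln1 subn0.
have step : (m - h.+1) * m <= (m - 1) * (m - h) by nia.
rewrite !expnS; move: (m ^ h) ((m - 1) ^ h) (IH (ltnW le_hm)) => X Y IH'.
have := leq_mul (leqnn X) step; have := leq_mul (leqnn (m - 1)) IH'; nia.
Qed.

Lemma expn_le_double_pred m h : 0 < m -> h.*2 <= m -> m ^ h <= 2 * (m - 1) ^ h.
Proof.
move=> m_gt0; rewrite -addnn => le_2hm.
have := bernoulli_pred (_ : h <= m) => /(_ ltac:(lia)).
move: (m ^ h) ((m - 1) ^ h) => X Y bound.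
have : X * m <= 2 * (X * (m - h)) by nia.
rewrite -(leq_pmul2r m_gt0); nia.
Qed.

Lemma expn_le_pow2_pred m t : 1 < m -> m ^ t <= 2 ^ (t %/ m./2).+1 * (m - 1) ^ t.
Proof.
move=> lt1m; set h := m./2; set j := t %/ h.
have h_gt0 : 0 < h by rewrite /h; lia.
have le_t : t <= j.+1 * h by apply: ltnW; apply: ltn_ceil.
have block : m ^ (j.+1 * h) <= 2 ^ j.+1 * (m - 1) ^ (j.+1 * h).
  rewrite mulnC !expnM -expnMn leq_exp2r //; apply: expn_le_double_pred; first lia.
  by rewrite -[X in _ <= X](odd_double_half m) leq_addl.
have pos : 0 < (m - 1) ^ (j.+1 * h - t) by rewrite expn_gt0; apply/orP; left; lia.
rewrite -(leq_pmul2r pos) -mulnA -expnD subnKC //.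
apply: leq_trans block; rewrite -[X in _ <= m ^ X](subnKC le_t) expnD leq_mul2l.
by case: (_ - t) => [|d]; rewrite ?orbT // leq_exp2r ?leq_subr ?orbT.
Qed.

Lemma expn_all_hit_le m t : 1 < m ->
  (m ^ t - (m - 1) ^ t) ^ m * m <= 2 ^ (t %/ m./2).+1 * (m ^ t) ^ m.
Proof.
move=> lt1m; have ratio := expn_le_pow2_pred t lt1m.
have le_ba : (m - 1) ^ t <= m ^ t.
  by case: t {ratio} => [|d]; rewrite // leq_exp2r ?leq_subr.
have := bernoulli_subn m le_ba; rewrite expnS.
have b_gt0 : 0 < (m - 1) ^ t by rewrite expn_gt0 subn_gt0 lt1m.
move: ratio b_gt0; set P := 2 ^ _; set B := (m - 1) ^ t; set A := m ^ t.
set X := (A - B) ^ m => ratio b_gt0 bound.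
rewrite -(leq_pmul2r b_gt0); have := leq_mul ratio (leqnn (A ^ m)); nia.
Qed.

Lemma scaled_expn2_le K j m : 256 * K ^ 4 <= m + m -> 16 ^ j <= (m + m) ^ 3 ->
  K * 2 ^ j.+1 <= m.
Proof.
move=> K_small j_small; rewrite -(@leq_exp2r _ _ 4) //.
have -> : (K * 2 ^ j.+1) ^ 4 = K ^ 4 * 16 * 16 ^ j.
  by rewrite expnMn -mulnA; congr (_ * _); rewrite -expnM mulnC expnM expnS.
have m4 : (m + m) * (m + m) ^ 3 = 16 * m ^ 4 by rewrite -expnS addnn -mul2n expnMn.
move: (K ^ 4) (16 ^ j) ((m + m) ^ 3) (m ^ 4) K_small j_small m4 => A Q N3 M4.
move=> K_small j_small m4; have := leq_mul K_small j_small; nia.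
Qed.

Lemma mul_le_of_ratio b x t p k m : 0 < m -> b <= x -> x * m <= p * t -> k * p <= m ->
  b * k <= t.
Proof.
move=> m_gt0 le_bx ratio le_kpm; rewrite -(leq_pmul2r m_gt0).
apply: (@leq_trans (k * (x * m))).
  by rewrite mulnAC mulnC; exact: leq_mul (leqnn k) (leq_mul le_bx (leqnn m)).
apply: (@leq_trans (k * p * t)); first by rewrite -mulnA; exact: leq_mul (leqnn k) ratio.
by rewrite [t * m]mulnC; exact: leq_mul le_kpm (leqnn t).
Qed.

Lemma INR_expn a k : INR (a ^ k) = pow (INR a) k.
Proof. by elim: k => [|k IH]; rewrite ?expn0 // expnS mult_INR IH. Qed.

Lemma ln2_pos : Rlt 0 (ln (INR 2)).
Proof. by rewrite -ln_1; apply: ln_increasing; simpl; lra. Qed.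

Lemma ln_nonneg x : Rle 1 x -> Rle 0 (ln x).
Proof.
move=> x_ge1; case: (Req_dec x 1) => [-> | ne1]; first by rewrite ln_1; lra.
by rewrite -ln_1; apply: Rlt_le; apply: ln_increasing; lra.
Qed.

Lemma INR_Int_part_le x : Rle 0 x -> Rle (INR (Z.to_nat (Int_part x))) x.
Proof.
move=> x_ge0; case: (Z_le_gt_dec 0 (Int_part x)) => [Ix_ge0 | Ix_lt0].
  by rewrite INR_IZR_INZ Z2Nat.id //; case: (base_Int_part x).
by rewrite (_ : Z.to_nat _ = 0) //; lia.
Qed.

Lemma threshold_expn_le n : 0 < n -> 2 ^ (8 * threshold n) <= n ^ n.
Proof.
move=> n_gt0; have nR_gt0 : Rlt 0 (INR n) by apply: lt_0_INR; apply/ltP.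
have INR8_gt0 : Rlt 0 (INR 8) by apply: lt_0_INR; apply/ltP.
have := ln2_pos; set l2 := ln (INR 2) => l2_gt0.
have := ln_nonneg (le_INR 1 n (elimT leP n_gt0)); set L := ln (INR n) => L_ge0.
set x := Rdiv (Rmult (INR n) (Rdiv L l2)) (INR 8).
have x_ge0 : Rle 0 x.
  apply: Rmult_le_pos; last by apply: Rlt_le; apply: Rinv_0_lt_compat.
  apply: Rmult_le_pos; first lra.
  by apply: Rmult_le_pos => //; apply: Rlt_le; apply: Rinv_0_lt_compat.
have T_le := INR_Int_part_le x_ge0; rewrite -/(threshold n) in T_le.
set T := threshold n in T_le *.
have T_ln : Rle (Rmult (INR (8 * T)) l2) (Rmult (INR n) L).
  rewrite mult_INR; have scale : Rlt 0 (Rmult (INR 8) l2) by apply: Rmult_lt_0_compat.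
  have := Rmult_le_compat_r _ _ _ (Rlt_le _ _ scale) T_le.
  have -> : Rmult x (Rmult (INR 8) l2) = Rmult (INR n) L by rewrite /x; field; lra.
  lra.
apply/leP; apply: INR_le; rewrite !INR_expn; apply: Rnot_lt_le => lt_pow.
have := ln_increasing _ _ (pow_lt _ n nR_gt0) lt_pow.
rewrite !ln_pow //; last by simpl; lra.
rewrite -/l2 -/L; lra.
Qed.

Lemma threshold_div_le n m : n = m + m -> 1 < m ->
  16 ^ (threshold n %/ m./2) <= n ^ 3.
Proof.
move=> n_double lt1m; set h := m./2; set j := threshold n %/ h.
have h_gt0 : 0 < h by rewrite /h; lia.
have le_n6h : n <= 6 * h by rewrite /h; lia.
have le_jhT : j * h <= threshold n by apply: leq_divM.
have : (2 ^ (8 * j)) ^ h <= (n ^ 6) ^ h.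
  rewrite -!expnM; apply: (@leq_trans (2 ^ (8 * threshold n))).
    by rewrite leq_exp2l //; lia.
  apply: (leq_trans (threshold_expn_le _)); first lia.
  by apply: leq_pexp2l; lia.
rewrite leq_exp2r // => le_pow.
rewrite -leq_sqr -!expnM (_ : 16 = 2 ^ 4) // -expnM.
by have -> : 4 * (j * 2) = 8 * j by lia.
Qed.

Section BipartiteGraph.
Variables (n T : nat).
Local Notation m := n./2.
Hypothesis n_double : n = m + m.
Hypothesis m_gt0 : 0 < m.
Local Notation e := (gedge n).
Local Notation runs := {ffun 'I_T -> {ffun 'I_n -> 'I_n}}.
Implicit Type ps : runs.

Fact apex_subproof : n.-1 < n. Proof. lia. Qed.
Let apex : 'I_n := Ordinal apex_subproof.

Lemma has_out_gedge (x : 'I_n) : has_out e x = (x < m).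
Proof.
apply/existsP/idP => [[y /andP[] //] | lt_xm].
by exists apex; rewrite /gedge lt_xm /=; lia.
Qed.

Definition pick_ok (x : 'I_n) : pred 'I_n :=
  fun y => if x < m then m <= y else y == x.

Lemma valid_pick_gedge (p : {ffun 'I_n -> 'I_n}) :
  valid_pick e p = [forall x, pick_ok x (p x)].
Proof.
by apply: eq_forallb => x; rewrite has_out_gedge /pick_ok /gedge; case: (x < m).
Qed.

Definition picks_ok (x : 'I_n) : simpl_pred {ffun 'I_T -> 'I_n} :=
  [pred u : {ffun 'I_T -> 'I_n} | [forall i, pick_ok x (u i)]].

Definition picks_hit (x : 'I_n) : simpl_pred {ffun 'I_T -> 'I_n} :=
  [pred u : {ffun 'I_T -> 'I_n} | picks_ok x u && ((x < m) ==> [exists i, u i == apex])].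

Lemma valid_run_gedge ps :
  valid_run e ps = [forall x, picks_ok x [ffun i => ps i x]].
Proof.
apply/forallP/forallP => [valid_ps x | ok_ps i].
  apply/forallP => i; rewrite ffunE.
  by move: (valid_ps i); rewrite valid_pick_gedge => /forallP.
rewrite valid_pick_gedge; apply/forallP => x.
by move/forallP: (ok_ps x) => /(_ i); rewrite ffunE.
Qed.

Lemma card_pick_ok x : #|pick_ok x| = if x < m then m else 1.
Proof.
case lt_xm: (x < m).
  rewrite (@eq_card _ _ [pred y : 'I_n | m <= y]) => [|y]; last first.
    by rewrite /pick_ok lt_xm inE.
  by rewrite card_ord_geq; lia.
by rewrite (@eq_card _ _ (pred1 x)) ?card1 // => y; rewrite /pick_ok lt_xm inE.
Qed.

Lemma card_picks_ok x : #|picks_ok x| = if x < m then m ^ T else 1.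
Proof.
rewrite /picks_ok (card_ffun_forall (fun _ : 'I_T => pick_ok x)).
rewrite prod_nat_const card_ord card_pick_ok.
by case: (x < m); rewrite ?exp1n.
Qed.

Lemma card_picks_hit x :
  #|picks_hit x| = if x < m then m ^ T - (m - 1) ^ T else 1.
Proof.
case lt_xm: (x < m); last first.
  have := card_picks_ok x; rewrite lt_xm => <-.
  by apply: eq_card => u; rewrite !inE lt_xm andbT.
set hits := [pred u : {ffun 'I_T -> 'I_n} | [exists i, u i == apex]].
have := cardID hits (picks_ok x); rewrite card_picks_ok lt_xm => <-.
have -> : #|picks_hit x| = #|[predI picks_ok x & hits]|.
  by apply: eq_card => u; rewrite !inE lt_xm.
suff -> : #|[predD picks_ok x & hits]| = (m - 1) ^ T by rewrite addnK.
set miss := [pred y : 'I_n | (m <= y) && (y != apex)].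
have card_miss : #|miss| = m - 1.
  have := cardD1 apex [pred y : 'I_n | m <= y].
  rewrite card_ord_geq ?inE /=; try lia.
  have -> : m <= n.-1 by lia.
  have -> : #|[predD1 [pred y : 'I_n | m <= y] & apex]| = #|miss|.
    by apply: eq_card => y; rewrite !inE andbC.
  lia.
have -> : (m - 1) ^ T = \prod_(i : 'I_T) #|miss|.
  by rewrite prod_nat_const card_ord card_miss.
rewrite -(card_ffun_forall (fun _ : 'I_T => miss)).
apply: eq_card => u; rewrite !inE negb_exists /pick_ok lt_xm.
apply/andP/forallP => [[/forallP ok_u /forallP miss_u] i | miss_u].
  by rewrite !inE ok_u miss_u.
by split; apply/forallP => i; have := miss_u i; rewrite !inE => /andP[].
Qed.

Lemma card_valid_runs : #|[pred ps : runs | valid_run e ps]| = (m ^ T) ^ m.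
Proof.
rewrite (eq_card (B := [pred ps : runs | [forall x, picks_ok x [ffun i => ps i x]]])).
  rewrite (card_ffun_columns picks_ok) (eq_bigr _ (fun x _ => card_picks_ok x)).
  by rewrite prod_ord_ltn_const //; lia.
by move=> ps; rewrite !inE valid_run_gedge.
Qed.

Variable c : color.
Hypothesis c_colored : colored c.
Local Notation state ps := (run e (@picks_of _ T ps) (init n c)).

Lemma state_apex ps t : state ps t apex = c.
Proof.
elim: t => [|t IH] /=; first by rewrite /init eqxx.
by rewrite /step IH has_out_gedge c_colored /=; case: (_ < m).
Qed.

Lemma state_sink ps t (y : 'I_n) : m <= y -> y != apex ->
  state ps t y = Unc.
Proof.
move=> le_my ne_y; elim: t => [|t IH] /=.
  by rewrite /init ifN //; apply: contra ne_y => /eqP y_apex; apply/eqP/val_inj.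
by rewrite /step IH has_out_gedge ltnNge le_my.
Qed.

Lemma colored_state_picked_apex ps t (x : 'I_n) : valid_run e ps -> t <= T -> x < m ->
  colored (state ps t x) -> exists i : 'I_T, ps i x == apex.
Proof.
move=> valid_ps; elim: t => [|t IH] le_tT lt_xm /=.
  by rewrite /init ifN // -[\val x]/(nat_of_ord x); lia.
have [col_x _ | uncol_x] := boolP (colored (state ps t x)).
  exact: IH (ltnW le_tT) lt_xm col_x.
have -> : picks_of ps t = ps (Ordinal le_tT) by rewrite /picks_of insubT.
have := forallP valid_ps (Ordinal le_tT).
rewrite valid_pick_gedge => /forallP /(_ x); rewrite /pick_ok lt_xm => le_m_pick.
rewrite /step (negbTE uncol_x) has_out_gedge lt_xm /=.
have [hit _ | miss] := eqVneq (ps (Ordinal le_tT) x) apex.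
  by exists (Ordinal le_tT); apply/eqP.
by rewrite state_sink // (negbTE uncol_x).
Qed.

Lemma unexceeded_picked_apex ps : valid_run e ps -> ~~ exceeds e (init n c) ps ->
  forall x : 'I_n, x < m -> exists i : 'I_T, ps i x == apex.
Proof.
move=> valid_ps; rewrite /exceeds negb_forall.
move=> /existsP [t /negPn /forallP stable_t] x lt_xm.
apply: (@colored_state_picked_apex ps t x valid_ps _ lt_xm); first by rewrite -ltnS.
have := forallP (stable_t x) apex.
by rewrite state_apex c_colored implybF negb_and negbK /gedge lt_xm /= leqNgt; lia.
Qed.

Lemma card_unexceeded_runs_le :
  #|[pred ps : runs | valid_run e ps && ~~ exceeds e (init n c) ps]|
  <= (m ^ T - (m - 1) ^ T) ^ m.
Proof.
rewrite -(prod_ord_ltn_const (m ^ T - (m - 1) ^ T) (_ : m <= n)); last by lia.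
rewrite -(eq_bigr _ (fun x _ => card_picks_hit x)) -(card_ffun_columns picks_hit).
apply: subset_leq_card; apply/subsetP => ps; rewrite !inE => /andP [valid_ps unexceeded_ps].
apply/forallP => x; move: (valid_ps); rewrite valid_run_gedge => /forallP /(_ x) ok_x.
rewrite inE ok_x; apply/implyP => lt_xm.
have [i hit] := unexceeded_picked_apex valid_ps unexceeded_ps lt_xm.
by apply/existsP; exists i; rewrite ffunE.
Qed.

End BipartiteGraph.

Section ProbabilityBound.
Variables (V : finType) (e : rel V) (s0 : V -> color) (T : nat).
Local Notation runs := {ffun 'I_T -> {ffun V -> V}}.

Lemma prob_exceeds_ge (K : nat) (eps : R) :
  0 < #|[pred ps : runs | valid_run e ps]| ->
  #|[pred ps : runs | valid_run e ps && ~~ exceeds e s0 ps]| * K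
     <= #|[pred ps : runs | valid_run e ps]| ->
  Rlt 1 (Rmult eps (INR K)) ->
  Rle (Rminus 1 eps) (prob_exceeds e s0 T).
Proof.
rewrite /prob_exceeds.
set tot := #|[pred ps : runs | valid_run e ps]|.
set bad := #|[pred ps : runs | valid_run e ps && ~~ exceeds e s0 ps]|.
set good := #|[pred ps : runs | valid_run e ps && exceeds e s0 ps]|.
move=> tot_gt0 bad_le epsK_gt1.
have split_tot : good + bad = tot.
  apply: etrans (cardID [pred ps : runs | exceeds e s0 ps] [pred ps : runs | valid_run e ps]).
  by congr (_ + _); apply: eq_card => ps; rewrite !inE // andbC.
have totR : INR tot = Rplus (INR good) (INR bad) by rewrite -split_tot plus_INR.
have tot_pos : Rlt 0 (INR tot) by apply: lt_0_INR; apply/ltP.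
have badK : Rle (Rmult (INR bad) (INR K)) (INR tot) by rewrite -mult_INR; apply/le_INR/leP.
have := pos_INR bad; have := pos_INR K => K_ge0 bad_ge0.
have bad_le_eps : Rle (INR bad) (Rmult eps (INR tot)) by nra.
apply: (Rmult_le_reg_r (INR tot)) => //.
rewrite /Rdiv Rmult_assoc Rinv_l; last lra.
nra.
Qed.

End ProbabilityBound.

Theorem mainTheorem8 (c : color) (hc : colored c) :
  forall eps : R, Rlt 0 eps ->
  exists N : nat, forall n : nat,
    (4 <= n)%N -> ~~ odd n -> (N <= n)%N ->
    Rle (Rminus 1 eps) (prob_exceeds (gedge n) (init n c) (threshold n)).
Proof.
move=> eps eps_gt0; have [K K_gt] := INR_unbounded (Rinv eps).
exists (256 * K ^ 4) => n n_ge4 n_even n_large.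
set m := n./2; set T := threshold n.
have n_double : n = m + m.
  by rewrite addnn -[n in LHS]odd_double_half (negbTE n_even).
have lt1m : 1 < m by lia.
have m_gt0 := ltnW lt1m.
apply: (@prob_exceeds_ge _ _ _ _ K).
- by rewrite card_valid_runs // !expn_gt0 m_gt0.
- have bad_le := card_unexceeded_runs_le T n_double m_gt0 hc.
  have miss_le := expn_all_hit_le T lt1m.
  have j_small := threshold_div_le n_double lt1m.
  rewrite -/T n_double in j_small; rewrite n_double in n_large.
  have scale := scaled_expn2_le n_large j_small.
  rewrite card_valid_runs //; exact: mul_le_of_ratio m_gt0 bad_le miss_le scale.
- have := Rmult_lt_compat_l eps _ _ eps_gt0 K_gt.
  by rewrite Rinv_r; lra.
Qed.
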